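(* The functor $T\colon\mathsf{WHB}\to\mathsf{TBA}$ is left adjoint to the functor $M\colon\mathsf{TBA}\to\mathsf{WHB}$. Moreover, $T$ preserves monomorphisms and is faithful, and $M$ is full and faithful.
   Context: A WHB-algebra is an algebra $(A,\wedge,\vee,\to,\leftarrow,0,1)$ such that $(A,\wedge,\vee,0,1)$ is a bounded distributive lattice and for all $a,b,c\in A$: $a\to a=1$; $a\to(b\wedge c)=(a\to b)\wedge(a\to c)$; $(a\vee b)\to c=(a\to c)\wedge(b\to c)$; $(a\to b)\wedge(b\to c)\le a\to c$; $a\leftarrow a=0$; $(a\vee b)\leftarrow c=(a\leftarrow c)\vee(b\leftarrow c)$; $a\leftarrow(b\wedge c)=(a\leftarrow b)\vee(a\leftarrow c)$; $a\leftarrow c\le(a\leftarrow b)\vee(b\leftarrow c)$; $a\wedge((a\to b)\leftarrow 0)\le b$; $a\le b\vee(1\to(a\leftarrow b))$. $\mathsf{WHB}$ is the category of WHB-algebras and homomorphisms. A tense algebra is $(\mathbf B,G,H)$ with $\mathbf B$ a Boolean algebra and $G,H$ unary operations such that, with $P(x)=\neg H(\neg x)$ and $F(x)=\neg G(\neg x)$, $P$ is left adjoint to $G$ and $F$ is left adjoint to $H$ (i.e. $P(x)\le y\iff x\le G(y)$ and $F(x)\le y\iff x\le H(y)$); $\mathsf{TBA}$ is the category of tense algebras and homomorphisms. $M(\mathbf B,G,H)$ is the WHB-algebra $(B,\wedge,\vee,\to,\leftarrow,0,1)$ with $x\to y=G(\neg x\vee y)$ and $x\leftarrow y=P(x\wedge\neg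 y)$, and $M$ is the identity on morphisms. For a WHB-algebra $\mathbf A$: $X(\mathbf A)$ is its set of prime filters, $\sigma_{\mathbf A}(a)=\{P\in X(\mathbf A)\colon a\in P\}$, $\tau_{\mathbf A}$ the topology with subbase $\{\sigma_{\mathbf A}(a)\}\cup\{X(\mathbf A)\setminus\sigma_{\mathbf A}(a)\}$; $(P,Q)\in R_{\mathbf A}$ iff for all $a,b$ ($a\to b\in P$, $a\in Q$ imply $b\in Q$); $(P,Q)\in S_{\mathbf A}$ iff for all $a,b$ ($a\in Q$, $b\notin Q$ imply $a\leftarrow b\in P$). $\mathcal B(\mathbf A)$ is the set of clopen subsets of $(X(\mathbf A),\tau_{\mathbf A})$ (equivalently finite unions of sets $\sigma_{\mathbf A}(a)\setminus\sigma_{\mathbf A}(b)$). $T(\mathbf A)=(\mathcal B(\mathbf A),\cup,\cap,{}^c,G_{\mathbf A},H_{\mathbf A},\emptyset,X(\mathbf A))$ with $G_{\mathbf A}(U)=\{P\colon R_{\mathbf A}(P)\subseteq U\}$ and $H_{\mathbf A}(U)=\{P\colon S_{\mathbf A}(P)\subseteq U\}$, where $\mathcal R(P)=\{Q\colon (P,Q)\in\mathcal R\}$. For a homomorphism $h\colon\mathbf A\to\mathbf B$, $T(h)(U)=\{Q\in X(\mathbf B)\colon h^{-1}(Q)\in U\}$, so that $T(h)(\sigma_{\mathbf A}(a)\setminus\sigma_{\mathbf A}(b))=\sigma_{\mathbf B}(h(a))\setminus\sigma_{\mathbf B}(h(b))$. *)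

From Stdlib Require Import List Classical ClassicalEpsilon.
Import ListNotations.

Definition is_bdl {X : Type} (meet join : X -> X -> X) (bot top : X) : Prop :=
  (forall a b c, meet a (meet b c) = meet (meet a b) c) /\
  (forall a b c, join a (join b c) = join (join a b) c) /\
  (forall a b, meet a b = meet b a) /\
  (forall a b, join a b = join b a) /\
  (forall a b, meet a (join a b) = a) /\
  (forall a b, join a (meet a b) = a) /\
  (forall a b c, meet a (join b c) = join (meet a b) (meet a c)) /\
  (forall a, meet a top = a) /\
  (forall a, join a bot = a).

Record WHBraw := {
  wcar : Type;
  wmeet : wcar -> wcar -> wcar;
  wjoin : wcar -> wcar -> wcar;
  wimp : wcar -> wcar -> wcar;
  wcoimp : wcar -> wcar -> wcar;
  wbot : wcar;
  wtop : wcar }.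

Definition wle (A : WHBraw) (a b : wcar A) : Prop := wmeet A a b = a.

Definition isWHB (A : WHBraw) : Prop :=
  let m := wmeet A in let j := wjoin A in
  let i := wimp A in let c := wcoimp A in
  let le := wle A in let z := wbot A in let o := wtop A in
  is_bdl m j z o /\
  (forall a, i a a = o) /\
  (forall a b d, i a (m b d) = m (i a b) (i a d)) /\
  (forall a b d, i (j a b) d = m (i a d) (i b d)) /\
  (forall a b d, le (m (i a b) (i b d)) (i a d)) /\
  (forall a, c a a = z) /\
  (forall a b d, c (j a b) d = j (c a d) (c b d)) /\
  (forall a b d, c a (m b d) = j (c a b) (c a d)) /\
  (forall a b d, le (c a d) (j (c a b) (c b d))) /\
  (forall a b, le (m a (c (i a b) z)) b) /\
  (forall a b, le a (j b (i o (c a b)))).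

Definition WHBhom (A A' : WHBraw) (f : wcar A -> wcar A') : Prop :=
  (forall a b, f (wmeet A a b) = wmeet A' (f a) (f b)) /\
  (forall a b, f (wjoin A a b) = wjoin A' (f a) (f b)) /\
  (forall a b, f (wimp A a b) = wimp A' (f a) (f b)) /\
  (forall a b, f (wcoimp A a b) = wcoimp A' (f a) (f b)) /\
  f (wbot A) = wbot A' /\
  f (wtop A) = wtop A'.

Record TBAraw := {
  tcar : Type;
  tmeet : tcar -> tcar -> tcar;
  tjoin : tcar -> tcar -> tcar;
  tneg : tcar -> tcar;
  tbot : tcar;
  ttop : tcar;
  tG : tcar -> tcar;
  tH : tcar -> tcar }.

Definition tle (B : TBAraw) (x y : tcar B) : Prop := tmeet B x y = x.
Definition tP (B : TBAraw) (x : tcar B) : tcar B := tneg B (tH B (tneg B x)).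
Definition tF (B : TBAraw) (x : tcar B) : tcar B := tneg B (tG B (tneg B x)).

Definition isTBA (B : TBAraw) : Prop :=
  is_bdl (tmeet B) (tjoin B) (tbot B) (ttop B) /\
  (forall x, tmeet B x (tneg B x) = tbot B) /\
  (forall x, tjoin B x (tneg B x) = ttop B) /\
  (forall x y, tle B (tP B x) y <-> tle B x (tG B y)) /\
  (forall x y, tle B (tF B x) y <-> tle B x (tH B y)).

Definition TBAhom (B B' : TBAraw) (f : tcar B -> tcar B') : Prop :=
  (forall x y, f (tmeet B x y) = tmeet B' (f x) (f y)) /\
  (forall x y, f (tjoin B x y) = tjoin B' (f x) (f y)) /\
  (forall x, f (tneg B x) = tneg B' (f x)) /\
  f (tbot B) = tbot B' /\
  f (ttop B) = ttop B' /\
  (forall x, f (tG B x) = tG B' (f x)) /\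
  (forall x, f (tH B x) = tH B' (f x)).

Definition M (B : TBAraw) : WHBraw := {|
  wcar := tcar B;
  wmeet := tmeet B;
  wjoin := tjoin B;
  wimp := fun x y => tG B (tjoin B (tneg B x) y);
  wcoimp := fun x y => tP B (tmeet B x (tneg B y));
  wbot := tbot B;
  wtop := ttop B |}.

Definition Mmap (B B' : TBAraw) (f : tcar B -> tcar B') : wcar (M B) -> wcar (M B') := f.

Definition prime_filter (A : WHBraw) (P : wcar A -> Prop) : Prop :=
  P (wtop A) /\ ~ P (wbot A) /\
  (forall a b, P a -> wle A a b -> P b) /\
  (forall a b, P a -> P b -> P (wmeet A a b)) /\
  (forall a b, P (wjoin A a b) -> P a \/ P b).

Definition X (A : WHBraw) : Type := { P : wcar A -> Prop | prime_filter A P }.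

Definition sigmaA (A : WHBraw) (a : wcar A) : X A -> Prop :=
  fun P => proj1_sig P a.

Definition RA (A : WHBraw) (P Q : X A) : Prop :=
  forall a b, proj1_sig P (wimp A a b) -> proj1_sig Q a -> proj1_sig Q b.

Definition SA (A : WHBraw) (P Q : X A) : Prop :=
  forall a b, proj1_sig Q a -> ~ proj1_sig Q b -> proj1_sig P (wcoimp A a b).

(* B(A): finite unions of sets sigma(a) \ sigma(b) (= the clopens of X(A)). *)
Definition inB (A : WHBraw) (U : X A -> Prop) : Prop :=
  exists l : list (wcar A * wcar A),
    forall P, U P <-> exists a b, In (a, b) l /\ sigmaA A a P /\ ~ sigmaA A b P.

Definition BA (A : WHBraw) : Type := { U : X A -> Prop | inB A U }.

Lemma inB_empty (A : WHBraw) : inB A (fun _ => False).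
Proof.
  exists nil; intros P; split; [intros [] | intros (a & b & H & _); destruct H].
Qed.

(* It is the identity on
   elements of B(A); the theorem below asserts (T_obj_ok, T_map_ok) that it is
   only ever applied to elements of B(A), so the fallback branch is never used. *)
Definition toB (A : WHBraw) (S : X A -> Prop) : BA A :=
  match excluded_middle_informative (inB A S) with
  | left p => exist _ S p
  | right _ => exist _ (fun _ => False) (inB_empty A)
  end.

Definition GA (A : WHBraw) (U : X A -> Prop) : X A -> Prop :=
  fun P => forall Q, RA A P Q -> U Q.
Definition HA (A : WHBraw) (U : X A -> Prop) : X A -> Prop :=
  fun P => forall Q, SA A P Q -> U Q.

Definition T (A : WHBraw) : TBAraw := {|
  tcar := BA A;
  tmeet := fun U V => toB A (fun P => proj1_sig U P /\ proj1_sig V P);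
  tjoin := fun U V => toB A (fun P => proj1_sig U P \/ proj1_sig V P);
  tneg := fun U => toB A (fun P => ~ proj1_sig U P);
  tbot := toB A (fun _ => False);
  ttop := toB A (fun _ => True);
  tG := fun U => toB A (GA A (proj1_sig U));
  tH := fun U => toB A (HA A (proj1_sig U)) |}.

Definition Tmap_raw (A A' : WHBraw) (h : wcar A -> wcar A') (U : BA A) : X A' -> Prop :=
  fun Q => exists p : prime_filter A (fun a => proj1_sig Q (h a)),
             proj1_sig U (exist _ (fun a => proj1_sig Q (h a)) p).

Definition Tmap (A A' : WHBraw) (h : wcar A -> wcar A') : tcar (T A) -> tcar (T A') :=
  fun U => toB A' (Tmap_raw A A' h U).

Definition T_obj_ok (A : WHBraw) : Prop :=
  inB A (fun _ => False) /\ inB A (fun _ => True) /\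
  forall U V : BA A,
    inB A (fun P => proj1_sig U P /\ proj1_sig V P) /\
    inB A (fun P => proj1_sig U P \/ proj1_sig V P) /\
    inB A (fun P => ~ proj1_sig U P) /\
    inB A (GA A (proj1_sig U)) /\
    inB A (HA A (proj1_sig U)).

Definition T_map_ok (A A' : WHBraw) (h : wcar A -> wcar A') : Prop :=
  forall U : BA A, inB A' (Tmap_raw A A' h U).

Definition T_is_functor : Prop :=
  (forall A, isWHB A -> T_obj_ok A /\ isTBA (T A)) /\
  (forall A A' h, isWHB A -> isWHB A' -> WHBhom A A' h ->
     T_map_ok A A' h /\ TBAhom (T A) (T A') (Tmap A A' h)) /\
  (forall A, isWHB A -> forall U, Tmap A A (fun a => a) U = U) /\
  (forall A A' A'' h h', isWHB A -> isWHB A' -> isWHB A'' ->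
     WHBhom A A' h -> WHBhom A' A'' h' ->
     forall U, Tmap A A'' (fun a => h' (h a)) U = Tmap A' A'' h' (Tmap A A' h U)).

Definition M_is_functor : Prop :=
  (forall B, isTBA B -> isWHB (M B)) /\
  (forall B B' f, isTBA B -> isTBA B' -> TBAhom B B' f ->
     WHBhom (M B) (M B') (Mmap B B' f)).

Definition T_left_adjoint_M : Prop :=
  exists Phi : forall (A : WHBraw) (B : TBAraw),
                 (tcar (T A) -> tcar B) -> (wcar A -> wcar (M B)),
    (forall A B, isWHB A -> isTBA B ->
       (forall g, TBAhom (T A) B g -> WHBhom A (M B) (Phi A B g)) /\
       (forall g1 g2, TBAhom (T A) B g1 -> TBAhom (T A) B g2 ->
          (forall a, Phi A B g1 a = Phi A B g2 a) -> forall U, g1 U = g2 U) /\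
       (forall f, WHBhom A (M B) f ->
          exists g, TBAhom (T A) B g /\ forall a, Phi A B g a = f a)) /\
    (forall A A' B B' (h : wcar A' -> wcar A) (k : tcar B -> tcar B')
            (g : tcar (T A) -> tcar B),
       isWHB A -> isWHB A' -> isTBA B -> isTBA B' ->
       WHBhom A' A h -> TBAhom B B' k -> TBAhom (T A) B g ->
       forall a', Phi A' B' (fun U => k (g (Tmap A' A h U))) a'
                  = Mmap B B' k (Phi A B g (h a'))).

Definition WHBmono (A A' : WHBraw) (h : wcar A -> wcar A') : Prop :=
  forall (C : WHBraw) (g1 g2 : wcar C -> wcar A), isWHB C ->
    WHBhom C A g1 -> WHBhom C A g2 ->
    (forall c, h (g1 c) = h (g2 c)) -> forall c, g1 c = g2 c.

Definition TBAmono (B B' : TBAraw) (k : tcar B -> tcar B') : Prop :=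
  forall (C : TBAraw) (g1 g2 : tcar C -> tcar B), isTBA C ->
    TBAhom C B g1 -> TBAhom C B g2 ->
    (forall c, k (g1 c) = k (g2 c)) -> forall c, g1 c = g2 c.

Definition T_preserves_monos : Prop :=
  forall A A' h, isWHB A -> isWHB A' -> WHBhom A A' h -> WHBmono A A' h ->
    TBAmono (T A) (T A') (Tmap A A' h).

Definition T_faithful : Prop :=
  forall A A' h1 h2, isWHB A -> isWHB A' -> WHBhom A A' h1 -> WHBhom A A' h2 ->
    (forall U, Tmap A A' h1 U = Tmap A A' h2 U) -> forall a, h1 a = h2 a.

Definition M_full : Prop :=
  forall B B' (f : wcar (M B) -> wcar (M B')), isTBA B -> isTBA B' ->
    WHBhom (M B) (M B') f -> exists k, TBAhom B B' k /\ forall x, Mmap B B' k x = f x.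

Definition M_faithful : Prop :=
  forall B B' f1 f2, isTBA B -> isTBA B' -> TBAhom B B' f1 -> TBAhom B B' f2 ->
    (forall x, Mmap B B' f1 x = Mmap B B' f2 x) -> forall x, f1 x = f2 x.

(* T(A) is the Boolean algebra of clopens of the dual space X(A), and
   σ : A -> M(T(A)) is a WHB-embedding, the unit of the adjunction.  The prime
   filter theorem yields the two identities
     G(σ(a)ᶜ ∪ σ(b)) = σ(a -> b)      H(σ(a)ᶜ ∪ σ(b)) = σ(a <- b)ᶜ,
   and every clopen is both a finite union of sets σ(a) ∖ σ(b) and a finite
   intersection of sets σ(a)ᶜ ∪ σ(b).  Since G and H preserve finite meets, a
   Boolean homomorphism g out of T(A) therefore commutes with G and H as soon as
   g ∘ σ is a WHB-homomorphism.  This makes T(h) a morphism, and lets a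
   WHB-morphism f : A -> M(B) extend to T(A) by σ(a) ∖ σ(b) |-> f a ∧ ¬ f b; the
   extension is well defined because it is computed on the prime filters of B,
   and it is unique because the σ(a) generate T(A).
   Monomorphisms of WHB are injective (test them on the kernel pair), so every
   prime filter of A is the preimage of one of A', and T(h) is injective.
   M is full because a lattice map between Boolean algebras preserves
   complements, while G x = 1 -> x, P x = x <- 0 and H = ¬P¬. *)

From Stdlib Require Import List Classical ClassicalEpsilon.
From Stdlib Require Import FunctionalExtensionality PropExtensionality.
From mathcomp Require classical_sets.
Import ListNotations.

Definition subset {T : Type} (U V : T -> Prop) : Prop := forall t, U t -> V t.

Lemma set_ext {T : Type} (U V : T -> Prop) : subset U V -> subset V U -> U = V.
Proof.
  intros H1 H2; apply functional_extensionality; intro t.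
  apply propositional_extensionality; split; auto.
Qed.

Lemma Zorn_extension {T : Type} (Good : (T -> Prop) -> Prop) (F0 : T -> Prop) :
  Good F0 ->
  (forall Ch : (T -> Prop) -> Prop, (exists G, Ch G) -> (forall G, Ch G -> Good G) ->
     (forall G G', Ch G -> Ch G' -> subset G G' \/ subset G' G) ->
     Good (fun x => exists G, Ch G /\ G x)) ->
  exists Mx, Good Mx /\ subset F0 Mx /\ forall G, Good G -> subset Mx G -> subset G Mx.
Proof.
  intros HF0 Hchain.
  (* Zorn is applied to the sets A with [F0 ∪ A] good, so that the empty chain is harmless. *)
  destruct (@classical_sets.Zorn_bigcup T (fun A => Good (fun x => F0 x \/ A x)))
    as (A & HA & Amax).
  - intros Fam HFam Htot; unfold classical_sets.bigcup, classical_sets.mkset.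
    destruct (classic (exists A, Fam A)) as [[A0 HA0] | Hnone].
    + set (Ch := fun G => exists A, Fam A /\ G = (fun x => F0 x \/ A x)).
      replace (fun x => F0 x \/ exists2 A, Fam A & A x)
        with (fun x => exists G, Ch G /\ G x).
      * apply Hchain.
        -- exists (fun x => F0 x \/ A0 x), A0; auto.
        -- intros G (A & HA & ->); apply HFam, HA.
        -- intros G G' (A & HA & ->) (A' & HA' & ->).
           destruct (Htot A A' HA HA') as [H | H]; [left | right];
             intros x [Hx | Hx]; auto.
      * apply set_ext.
        -- intros x (G & (A & HA & ->) & [Hx | Hx]); auto. right; exists A; auto.
        -- intros x [Hx | [A HA Hx]].
           ++ exists (fun x => F0 x \/ A0 x); split; auto. exists A0; auto.
           ++ exists (fun x => F0 x \/ A x); split; auto. exists A; auto.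
    + replace (fun x => F0 x \/ exists2 A, Fam A & A x) with F0; auto.
      apply set_ext; intros x Hx; auto.
      destruct Hx as [Hx | [A HA _]]; auto. exfalso; eauto.
  - exists (fun x => F0 x \/ A x); split; [exact HA | split; [intros x; auto |]].
    intros G HG HAG x Hx.
    destruct (classic (subset G A)) as [HGA | HGA]; [right; auto |].
    exfalso; apply (Amax G); [split; [intros y Hy; apply HAG; auto | exact HGA] |].
    replace (fun x => F0 x \/ G x) with G; auto.
    apply set_ext; intros y Hy; auto. destruct Hy as [Hy | Hy]; auto.
Qed.

Definition lat_le {X : Type} (m : X -> X -> X) (a b : X) : Prop := m a b = a.

Definition is_filter {X : Type} (m : X -> X -> X) (o : X) (F : X -> Prop) : Prop :=
  F o /\ (forall a b, F a -> lat_le m a b -> F b) /\ (forall a b, F a -> F b -> F (m a b)).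

Definition is_ideal {X : Type} (m j : X -> X -> X) (z : X) (I : X -> Prop) : Prop :=
  I z /\ (forall a b, I b -> lat_le m a b -> I a) /\ (forall a b, I a -> I b -> I (j a b)).

(* Field order as in [prime_filter], so that the point [P : X A] gives
   [proj2_sig P : is_prime_filter (wmeet A) (wjoin A) (wbot A) (wtop A) (proj1_sig P)]. *)
Definition is_prime_filter {X : Type} (m j : X -> X -> X) (z o : X) (Q : X -> Prop) : Prop :=
  Q o /\ ~ Q z /\ (forall a b, Q a -> lat_le m a b -> Q b) /\
  (forall a b, Q a -> Q b -> Q (m a b)) /\ (forall a b, Q (j a b) -> Q a \/ Q b).

Definition upset {X : Type} (m : X -> X -> X) (D : X -> Prop) : X -> Prop :=
  fun y => exists d, D d /\ lat_le m d y.
Definition downset {X : Type} (m : X -> X -> X) (D : X -> Prop) : X -> Prop :=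
  fun y => exists d, D d /\ lat_le m y d.

Section Lattice.
Context {X : Type} {m j : X -> X -> X} {z o : X}.
Hypothesis L : is_bdl m j z o.

Lemma meetA a b c : m a (m b c) = m (m a b) c. Proof. apply L. Qed.
Lemma joinA a b c : j a (j b c) = j (j a b) c. Proof. apply L. Qed.
Lemma meetC a b : m a b = m b a. Proof. apply L. Qed.
Lemma joinC a b : j a b = j b a. Proof. apply L. Qed.
Lemma meet_absorb a b : m a (j a b) = a. Proof. apply L. Qed.
Lemma join_absorb a b : j a (m a b) = a. Proof. apply L. Qed.
Lemma meet_distr a b c : m a (j b c) = j (m a b) (m a c). Proof. apply L. Qed.
Lemma meet_top a : m a o = a. Proof. apply L. Qed.
Lemma join_bot a : j a z = a. Proof. apply L. Qed.

Lemma meet_idem a : m a a = a.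
Proof. rewrite <- (join_absorb a a) at 2. apply meet_absorb. Qed.

Lemma le_refl a : lat_le m a a. Proof. apply meet_idem. Qed.

Lemma le_trans a b c : lat_le m a b -> lat_le m b c -> lat_le m a c.
Proof. unfold lat_le; intros H1 H2. rewrite <- H1, <- meetA, H2. reflexivity. Qed.

Lemma le_antisym a b : lat_le m a b -> lat_le m b a -> a = b.
Proof. unfold lat_le; intros H1 H2. rewrite <- H1, meetC. exact H2. Qed.

Lemma le_join_eq a b : lat_le m a b <-> j a b = b.
Proof.
  unfold lat_le; split; intro H.
  - rewrite <- H, joinC, meetC. apply join_absorb.
  - rewrite <- H. apply meet_absorb.
Qed.

Lemma meet_lb1 a b : lat_le m (m a b) a.
Proof. unfold lat_le. rewrite (meetC a b), <- meetA, meet_idem. reflexivity. Qed.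
Lemma meet_lb2 a b : lat_le m (m a b) b.
Proof. unfold lat_le. rewrite <- meetA, meet_idem. reflexivity. Qed.
Lemma meet_glb a b c : lat_le m c a -> lat_le m c b -> lat_le m c (m a b).
Proof. unfold lat_le; intros H1 H2. rewrite meetA, H1, H2. reflexivity. Qed.
Lemma join_ub1 a b : lat_le m a (j a b). Proof. apply meet_absorb. Qed.
Lemma join_ub2 a b : lat_le m b (j a b). Proof. rewrite joinC. apply meet_absorb. Qed.
Lemma join_lub a b c : lat_le m a c -> lat_le m b c -> lat_le m (j a b) c.
Proof. rewrite !le_join_eq; intros H1 H2. rewrite <- joinA, H2, H1. reflexivity. Qed.
Lemma le_top a : lat_le m a o. Proof. apply meet_top. Qed.
Lemma bot_le a : lat_le m z a. Proof. apply le_join_eq. rewrite joinC. apply join_bot. Qed.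

Lemma meet_mono a b a' b' : lat_le m a a' -> lat_le m b b' -> lat_le m (m a b) (m a' b').
Proof.
  intros Ha Hb; apply meet_glb.
  - eapply le_trans; [apply meet_lb1 | exact Ha].
  - eapply le_trans; [apply meet_lb2 | exact Hb].
Qed.
Lemma join_mono a b a' b' : lat_le m a a' -> lat_le m b b' -> lat_le m (j a b) (j a' b').
Proof.
  intros Ha Hb; apply join_lub.
  - eapply le_trans; [exact Ha | apply join_ub1].
  - eapply le_trans; [exact Hb | apply join_ub2].
Qed.

Lemma upset_filter D :
  (exists d, D d) -> (forall d1 d2, D d1 -> D d2 -> exists d, D d /\ lat_le m d (m d1 d2)) ->
  is_filter m o (upset m D).
Proof.
  intros [d0 Hd0] Hdir; split; [| split].
  - exists d0; split; [exact Hd0 | apply le_top].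
  - intros a b (d & Hd & Hda) Hab; exists d; split; [exact Hd | eapply le_trans; eauto].
  - intros a b (d1 & H1 & Ha) (d2 & H2 & Hb).
    destruct (Hdir d1 d2 H1 H2) as (d & Hd & Hle).
    exists d; split; [exact Hd | eapply le_trans; [exact Hle | apply meet_mono; auto]].
Qed.

Lemma downset_ideal D :
  (exists d, D d) -> (forall d1 d2, D d1 -> D d2 -> exists d, D d /\ lat_le m (j d1 d2) d) ->
  is_ideal m j z (downset m D).
Proof.
  intros [d0 Hd0] Hdir; split; [| split].
  - exists d0; split; [exact Hd0 | apply bot_le].
  - intros a b (d & Hd & Hbd) Hab; exists d; split; [exact Hd | eapply le_trans; eauto].
  - intros a b (d1 & H1 & Ha) (d2 & H2 & Hb).
    destruct (Hdir d1 d2 H1 H2) as (d & Hd & Hle).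
    exists d; split; [exact Hd | eapply le_trans; [apply join_mono; eauto | exact Hle]].
Qed.

Lemma upset_incl D : subset D (upset m D).
Proof. intros d Hd; exists d; split; [exact Hd | apply le_refl]. Qed.
Lemma downset_incl D : subset D (downset m D).
Proof. intros d Hd; exists d; split; [exact Hd | apply le_refl]. Qed.

Lemma filter_adjoin F c :
  is_filter m o F -> is_filter m o (upset m (fun y => exists t, F t /\ y = m t c)).
Proof.
  intros (Fo & _ & Fm); apply upset_filter.
  - exists (m o c), o; auto.
  - intros d1 d2 (t1 & H1 & ->) (t2 & H2 & ->); exists (m (m t1 t2) c); split; eauto.
    apply meet_glb; apply meet_mono; auto using meet_lb1, meet_lb2, le_refl.
Qed.

Lemma filter_union_chain (Ch : (X -> Prop) -> Prop) :
  (exists G, Ch G) -> (forall G, Ch G -> is_filter m o G) ->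
  (forall G G', Ch G -> Ch G' -> subset G G' \/ subset G' G) ->
  is_filter m o (fun x => exists G, Ch G /\ G x).
Proof.
  intros [G0 HG0] Hfil Htot; split; [| split].
  - exists G0; split; [exact HG0 | apply Hfil, HG0].
  - intros a b (G & HG & Ha) Hab; exists G; split; [exact HG | eapply Hfil; eauto].
  - intros a b (G & HG & Ha) (G' & HG' & Hb).
    destruct (Htot G G' HG HG') as [H | H];
      [exists G' | exists G]; split; auto; apply Hfil; auto.
Qed.

Theorem prime_filter_theorem F I :
  is_filter m o F -> is_ideal m j z I -> (forall x, F x -> I x -> False) ->
  exists Q, is_prime_filter m j z o Q /\ subset F Q /\ (forall x, Q x -> I x -> False).
Proof.
  intros HF HI HFI.
  destruct (Zorn_extension
              (fun G => is_filter m o G /\ (forall x, G x -> I x -> False)) F)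
    as (Mx & (HMf & HMI) & HFM & Hmax).
  - split; assumption.
  - intros Ch Hne HCh Htot; split.
    + apply filter_union_chain; auto. intros G HG; apply HCh, HG.
    + intros x (G & HG & Gx); apply (HCh G HG); exact Gx.
  - exists Mx; split; [| split; assumption].
    pose proof HMf as (Mo & Mup & Mmeet); destruct HI as (Iz & Idown & Ijoin).
    refine (conj Mo (conj (fun Mz => HMI z Mz Iz) (conj Mup (conj Mmeet _)))).
    (* By maximality, the filter generated by [Mx] and any [c] outside [Mx] meets [I]. *)
    assert (Hout : forall c, ~ Mx c -> exists t y, Mx t /\ lat_le m (m t c) y /\ I y).
    { intros c Nc; apply NNPP; intro Hn; apply Nc.
      refine (Hmax _ (conj (filter_adjoin Mx c HMf) _) _ c _).
      - intros y (d & (t & Ht & ->) & Hle) Iy; apply Hn; exists t, y; auto.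
      - intros t Ht; exists (m t c); split; [exists t; auto | apply meet_lb1].
      - exists (m o c); split; [exists o; auto | apply meet_lb2]. }
    intros a b Hab; apply NNPP; intro Hn; apply not_or_and in Hn; destruct Hn as [Na Nb].
    destruct (Hout a Na) as (t1 & y1 & Ht1 & Hl1 & Iy1).
    destruct (Hout b Nb) as (t2 & y2 & Ht2 & Hl2 & Iy2).
    apply (HMI (m (m t1 t2) (j a b))); [auto |].
    apply (Idown _ (j y1 y2)); [auto |].
    rewrite meet_distr; apply join_mono; eapply le_trans; eauto;
      apply meet_mono; auto using meet_lb1, meet_lb2, le_refl.
Qed.

Corollary prime_filter_between D E :
  (exists d, D d) -> (forall d1 d2, D d1 -> D d2 -> exists d, D d /\ lat_le m d (m d1 d2)) ->
  (exists e, E e) -> (forall e1 e2, E e1 -> E e2 -> exists e, E e /\ lat_le m (j e1 e2) e) ->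
  (forall d e, D d -> E e -> ~ lat_le m d e) ->
  exists Q, is_prime_filter m j z o Q /\ subset D Q /\ (forall e, E e -> ~ Q e).
Proof.
  intros HD HDdir HE HEdir HDE.
  destruct (prime_filter_theorem (upset m D) (downset m E)) as (Q & HQ & HDQ & HQE).
  - apply upset_filter; assumption.
  - apply downset_ideal; assumption.
  - intros x (d & Hd & Hdx) (e & He & Hxe); exact (HDE d e Hd He (le_trans _ _ _ Hdx Hxe)).
  - exists Q; split; [exact HQ | split].
    + intros d Hd; apply HDQ, upset_incl, Hd.
    + intros e He Qe; exact (HQE e Qe (downset_incl E e He)).
Qed.

Lemma prime_separation a b :
  ~ lat_le m a b -> exists Q, is_prime_filter m j z o Q /\ Q a /\ ~ Q b.
Proof.
  intro Hab.
  destruct (prime_filter_between (eq a) (eq b)) as (Q & HQ & Ha & Hb).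
  - exists a; reflexivity.
  - intros ? ? <- <-; exists a; split; [reflexivity | rewrite meet_idem; apply le_refl].
  - exists b; reflexivity.
  - intros ? ? <- <-; exists b; split; [reflexivity | apply join_lub; apply le_refl].
  - intros d e <- <-; exact Hab.
  - exists Q; split; [exact HQ | split; [apply Ha; reflexivity | apply Hb; reflexivity]].
Qed.

Lemma le_of_prime_filters a b :
  (forall Q, is_prime_filter m j z o Q -> Q a -> Q b) -> lat_le m a b.
Proof.
  intro H; apply NNPP; intro Hn.
  destruct (prime_separation a b Hn) as (Q & HQ & Ha & Hb); exact (Hb (H Q HQ Ha)).
Qed.

Lemma eq_of_prime_filters a b :
  (forall Q, is_prime_filter m j z o Q -> (Q a <-> Q b)) -> a = b.
Proof.
  intro H; apply le_antisym; apply le_of_prime_filters; intros Q HQ; apply (H Q HQ).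
Qed.

Section PrimeFilter.
Context {Q : X -> Prop} (HQ : is_prime_filter m j z o Q).

Lemma prime_top : Q o. Proof. apply HQ. Qed.
Lemma prime_not_bot : ~ Q z. Proof. apply HQ. Qed.
Lemma prime_le a b : lat_le m a b -> Q a -> Q b.
Proof. intros Hab Ha; exact (proj1 (proj2 (proj2 HQ)) a b Ha Hab). Qed.
Lemma prime_meet a b : Q (m a b) <-> Q a /\ Q b.
Proof.
  split.
  - intro H; split; [apply (prime_le (m a b)) | apply (prime_le (m a b))];
      auto using meet_lb1, meet_lb2.
  - intros [Ha Hb]; exact (proj1 (proj2 (proj2 (proj2 HQ))) a b Ha Hb).
Qed.
Lemma prime_join a b : Q (j a b) <-> Q a \/ Q b.
Proof.
  split; [exact (proj2 (proj2 (proj2 (proj2 HQ))) a b) |].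
  intros [H | H]; [apply (prime_le a) | apply (prime_le b)]; auto using join_ub1, join_ub2.
Qed.
End PrimeFilter.
End Lattice.

Definition tba_mirror (B : TBAraw) : TBAraw := {|
  tcar := tcar B; tmeet := tmeet B; tjoin := tjoin B; tneg := tneg B;
  tbot := tbot B; ttop := ttop B; tG := tH B; tH := tG B |}.

Lemma isTBA_mirror B : isTBA B -> isTBA (tba_mirror B).
Proof.
  intros (HL & Hc1 & Hc2 & HPG & HFH).
  exact (conj HL (conj Hc1 (conj Hc2 (conj HFH HPG)))).
Qed.

Section Tense.
Variable B : TBAraw.
Hypothesis HB : isTBA B.

Lemma tba_bdl : is_bdl (tmeet B) (tjoin B) (tbot B) (ttop B).
Proof. apply HB. Qed.

Definition tba_prime := is_prime_filter (tmeet B) (tjoin B) (tbot B) (ttop B).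

Lemma tba_prime_top Q : tba_prime Q -> (Q (ttop B) <-> True).
Proof. intro HQ; split; [auto | intros _; exact (prime_top HQ)]. Qed.
Lemma tba_prime_bot Q : tba_prime Q -> (Q (tbot B) <-> False).
Proof. intro HQ; split; [exact (prime_not_bot HQ) | intros []]. Qed.
Lemma tba_prime_neg Q : tba_prime Q -> forall a, Q (tneg B a) <-> ~ Q a.
Proof.
  intros HQ a; destruct HB as (_ & Hmeet & Hjoin & _); split.
  - intros Hna Ha; apply (prime_not_bot HQ); rewrite <- (Hmeet a).
    apply (prime_meet tba_bdl HQ); auto.
  - intro Hna; assert (H : Q (tjoin B a (tneg B a))) by (rewrite Hjoin; exact (prime_top HQ)).
    apply (prime_join tba_bdl HQ) in H; tauto.
Qed.
End Tense.

(* Two Boolean terms are equal (resp. ordered) iff they lie in the same prime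
   filters, and prime-filter membership commutes with the connectives. *)
Ltac tba_prime_simpl HB Q HQ :=
  repeat first
    [ rewrite (prime_meet (tba_bdl _ HB) HQ) in *
    | rewrite (prime_join (tba_bdl _ HB) HQ) in *
    | rewrite (tba_prime_neg _ HB Q HQ) in *
    | rewrite (tba_prime_top _ Q HQ) in *
    | rewrite (tba_prime_bot _ Q HQ) in * ].

Ltac tba_decide HB :=
  first [ apply (eq_of_prime_filters (tba_bdl _ HB))
        | apply (le_of_prime_filters (tba_bdl _ HB)) ];
  let Q := fresh "Q" in let HQ := fresh "HQ" in
  intros Q HQ; tba_prime_simpl HB Q HQ; tauto.

Section TenseOperators.
Variable B : TBAraw.
Hypothesis HB : isTBA B.

Notation L := (tba_bdl B HB).

Lemma adj_PG x y : tle B (tP B x) y <-> tle B x (tG B y). Proof. apply HB. Qed.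

Lemma le_GP x : tle B x (tG B (tP B x)). Proof. apply adj_PG, (le_refl L). Qed.
Lemma PG_le x : tle B (tP B (tG B x)) x. Proof. apply adj_PG, (le_refl L). Qed.

Lemma G_mono x y : tle B x y -> tle B (tG B x) (tG B y).
Proof. intro H; apply adj_PG; eapply (le_trans L); [apply PG_le | exact H]. Qed.
Lemma P_mono x y : tle B x y -> tle B (tP B x) (tP B y).
Proof. intro H; apply adj_PG; eapply (le_trans L); [exact H | apply le_GP]. Qed.

Lemma G_meet x y : tG B (tmeet B x y) = tmeet B (tG B x) (tG B y).
Proof.
  apply (le_antisym L).
  - apply (meet_glb L); apply G_mono; tba_decide HB.
  - apply adj_PG; apply (meet_glb L); (eapply (le_trans L); [apply P_mono | apply PG_le]);
      tba_decide HB.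
Qed.

Lemma G_top : tG B (ttop B) = ttop B.
Proof. apply (le_antisym L); [apply (le_top L) | apply adj_PG, (le_top L)]. Qed.

Lemma P_join x y : tP B (tjoin B x y) = tjoin B (tP B x) (tP B y).
Proof.
  apply (le_antisym L).
  - apply adj_PG; apply (join_lub L); (eapply (le_trans L); [apply le_GP | apply G_mono]);
      tba_decide HB.
  - apply (join_lub L); apply P_mono; tba_decide HB.
Qed.

Lemma P_bot : tP B (tbot B) = tbot B.
Proof. apply (le_antisym L); [apply adj_PG, (bot_le L) | apply (bot_le L)]. Qed.

Lemma H_as_P x : tH B x = tneg B (tP B (tneg B x)).
Proof.
  unfold tP; replace (tneg B (tneg B x)) with x by tba_decide HB; tba_decide HB.
Qed.

Lemma neg_unique x y : tmeet B x y = tbot B -> tjoin B x y = ttop B -> y = tneg B x.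
Proof.
  intros Hm Hj; apply (eq_of_prime_filters L); intros Q HQ.
  apply (f_equal Q) in Hm; apply (f_equal Q) in Hj.
  assert (Hm' : Q (tmeet B x y) <-> Q (tbot B)) by (rewrite Hm; tauto).
  assert (Hj' : Q (tjoin B x y) <-> Q (ttop B)) by (rewrite Hj; tauto).
  tba_prime_simpl HB Q HQ; tauto.
Qed.
End TenseOperators.

Section FunctorM.
Variable B : TBAraw.
Hypothesis HB : isTBA B.

Notation L := (tba_bdl B HB).

Lemma M_isWHB : isWHB (M B).
Proof.
  unfold isWHB, wle; cbn.
  split; [exact L |].
  repeat split.
  - intro a; replace (tjoin B (tneg B a) a) with (ttop B) by tba_decide HB.
    apply (G_top B HB).
  - intros a b d; rewrite <- (G_meet B HB); f_equal; tba_decide HB.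
  - intros a b d; rewrite <- (G_meet B HB); f_equal; tba_decide HB.
  - intros a b d; rewrite <- (G_meet B HB); apply (G_mono B HB); tba_decide HB.
  - intro a; replace (tmeet B a (tneg B a)) with (tbot B) by tba_decide HB.
    apply (P_bot B HB).
  - intros a b d; rewrite <- (P_join B HB); f_equal; tba_decide HB.
  - intros a b d; rewrite <- (P_join B HB); f_equal; tba_decide HB.
  - intros a b d; rewrite <- (P_join B HB); apply (P_mono B HB); tba_decide HB.
  - intros a b.
    replace (tmeet B (tG B (tjoin B (tneg B a) b)) (tneg B (tbot B)))
      with (tG B (tjoin B (tneg B a) b)) by tba_decide HB.
    eapply (le_trans L); [apply (meet_mono L); [apply (le_refl L) | apply (PG_le B HB)] |].
    tba_decide HB.
  - intros a b.
    replace (tjoin B (tneg B (ttop B)) (tP B (tmeet B a (tneg B b))))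
      with (tP B (tmeet B a (tneg B b))) by tba_decide HB.
    eapply (le_trans L); [| apply (join_mono L); [apply (le_refl L) | apply (le_GP B HB)]].
    tba_decide HB.
Qed.

Lemma M_imp_top x : wimp (M B) (ttop B) x = tG B x.
Proof. cbn; f_equal; tba_decide HB. Qed.

Lemma M_coimp_bot x : wcoimp (M B) x (tbot B) = tP B x.
Proof. cbn; f_equal; tba_decide HB. Qed.
End FunctorM.

Lemma M_functorial : M_is_functor.
Proof.
  split; [exact M_isWHB |].
  intros B B' f _ _ (Hm & Hj & Hn & Hb & Ht & HG & HH).
  unfold WHBhom, Mmap; cbn; unfold tP.
  repeat split; intros;
    repeat (rewrite Hm || rewrite Hj || rewrite Hn || rewrite HG || rewrite HH);
    first [reflexivity | assumption].
Qed.

Lemma M_fullness : M_full.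
Proof.
  intros B B' f HB HB' (Hm & Hj & Hi & Hc & Hb & Ht); cbn in Hm, Hj, Hb, Ht.
  assert (Hn : forall x, f (tneg B x) = tneg B' (f x)).
  { intro x; apply (neg_unique B' HB'); [rewrite <- Hb | rewrite <- Ht].
    - rewrite <- Hm; f_equal; tba_decide HB.
    - rewrite <- Hj; f_equal; tba_decide HB. }
  assert (HG : forall x, f (tG B x) = tG B' (f x)).
  { intro x; rewrite <- (M_imp_top B HB), <- (M_imp_top B' HB'), Hi, Ht; reflexivity. }
  assert (HP : forall x, f (tP B x) = tP B' (f x)).
  { intro x; rewrite <- (M_coimp_bot B HB), <- (M_coimp_bot B' HB'), Hc, Hb; reflexivity. }
  exists f; split; [| reflexivity].
  repeat split; try assumption.
  intro x; rewrite (H_as_P B HB), (H_as_P B' HB'), Hn, HP, Hn; reflexivity.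
Qed.

Lemma M_faithfulness : M_faithful.
Proof. intros B B' f1 f2 _ _ _ _ H; exact H. Qed.

Notation "a ∈ P" := (proj1_sig P a) (at level 70, no associativity).

Section WHBAlgebra.
Variable A : WHBraw.
Hypothesis HWA : isWHB A.

Local Notation m := (wmeet A).
Local Notation jn := (wjoin A).
Local Notation im := (wimp A).
Local Notation co := (wcoimp A).
Local Notation z := (wbot A).
Local Notation o := (wtop A).

Lemma whb_bdl : is_bdl m jn z o. Proof. apply HWA. Qed.
Local Notation L := whb_bdl.

Lemma imp_refl a : im a a = o.
Proof. destruct HWA as (_ & H & _); apply H. Qed.
Lemma imp_meetr a b d : im a (m b d) = m (im a b) (im a d).
Proof. destruct HWA as (_ & _ & H & _); apply H. Qed.
Lemma imp_joinl a b d : im (jn a b) d = m (im a d) (im b d).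
Proof. destruct HWA as (_ & _ & _ & H & _); apply H. Qed.
Lemma coimp_refl a : co a a = z.
Proof. destruct HWA as (_ & _ & _ & _ & _ & H & _); apply H. Qed.
Lemma coimp_joinl a b d : co (jn a b) d = jn (co a d) (co b d).
Proof. destruct HWA as (_ & _ & _ & _ & _ & _ & H & _); apply H. Qed.
Lemma coimp_meetr a b d : co a (m b d) = jn (co a b) (co a d).
Proof. destruct HWA as (_ & _ & _ & _ & _ & _ & _ & H & _); apply H. Qed.
Lemma imp_coimp_le a b : lat_le m (m a (co (im a b) z)) b.
Proof. destruct HWA as (_ & _ & _ & _ & _ & _ & _ & _ & _ & H & _); apply H. Qed.
Lemma le_join_imp_coimp a b : lat_le m a (jn b (im o (co a b))).
Proof. destruct HWA as (_ & _ & _ & _ & _ & _ & _ & _ & _ & _ & H); apply H. Qed.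

Lemma imp_monor a b d : lat_le m b d -> lat_le m (im a b) (im a d).
Proof. intro H; unfold lat_le at 1; rewrite <- imp_meetr, H; reflexivity. Qed.
Lemma imp_antil a a' b : lat_le m a a' -> lat_le m (im a' b) (im a b).
Proof.
  intro H; apply (le_join_eq L) in H; rewrite <- H, imp_joinl; apply (meet_lb1 L).
Qed.
Lemma coimp_monol a a' b : lat_le m a a' -> lat_le m (co a b) (co a' b).
Proof.
  intro H; apply (le_join_eq L) in H; rewrite <- H, coimp_joinl; apply (join_ub1 L).
Qed.
Lemma coimp_antir a b b' : lat_le m b b' -> lat_le m (co a b') (co a b).
Proof. intro H; unfold lat_le in H; rewrite <- H, coimp_meetr; apply (join_ub2 L). Qed.

Lemma imp_le x x' t t' : lat_le m x' x -> lat_le m t t' -> lat_le m (im x t) (im x' t').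
Proof. intros Hx Ht; eapply (le_trans L); [apply imp_monor, Ht | apply imp_antil, Hx]. Qed.
Lemma coimp_le x x' t t' : lat_le m x x' -> lat_le m t' t -> lat_le m (co x t) (co x' t').
Proof. intros Hx Ht; eapply (le_trans L); [apply coimp_monol, Hx | apply coimp_antir, Ht]. Qed.

Lemma imp_top_le a y : lat_le m (im o y) (im a y).
Proof. apply imp_antil, (le_top L). Qed.
Lemma imp_meet_self a w : im a (m a w) = im a w.
Proof. rewrite imp_meetr, imp_refl, (meetC L), (meet_top L); reflexivity. Qed.

Lemma point_prime (P : X A) : is_prime_filter m jn z o (proj1_sig P).
Proof. exact (proj2_sig P). Qed.

Lemma point_top (P : X A) : o ∈ P. Proof. exact (prime_top (point_prime P)). Qed.
Lemma point_not_bot (P : X A) : ~ z ∈ P. Proof. exact (prime_not_bot (point_prime P)). Qed.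
Lemma point_le (P : X A) a b : lat_le m a b -> a ∈ P -> b ∈ P.
Proof. exact (prime_le (point_prime P) a b). Qed.
Lemma point_meet (P : X A) a b : m a b ∈ P <-> a ∈ P /\ b ∈ P.
Proof. exact (prime_meet L (point_prime P) a b). Qed.
Lemma point_join (P : X A) a b : jn a b ∈ P <-> a ∈ P \/ b ∈ P.
Proof. exact (prime_join L (point_prime P) a b). Qed.

Lemma R_S_converse P Q : RA A P Q -> SA A Q P.
Proof.
  intros HR a b Ha Hb.
  pose proof (point_le P _ _ (le_join_imp_coimp a b) Ha) as H.
  apply point_join in H; destruct H as [H | H]; [contradiction |].
  exact (HR o _ H (point_top Q)).
Qed.

Lemma S_R_converse P Q : SA A P Q -> RA A Q P.
Proof.
  intros HS a b Hab Ha.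
  apply (point_le P _ _ (imp_coimp_le a b)), point_meet; split; [exact Ha |].
  apply HS; [exact Hab | apply point_not_bot].
Qed.

Lemma imp_mem_of_coimp_le (P : X A) a b x t :
  x ∈ P -> ~ t ∈ P -> lat_le m (m a (co x t)) b -> im a b ∈ P.
Proof.
  intros Hx Ht Hle.
  pose proof (point_le P _ _ (le_join_imp_coimp x t) Hx) as H.
  apply point_join in H; destruct H as [H | H]; [contradiction |].
  apply (point_le P (im a (m a (co x t)))); [apply imp_monor, Hle |].
  rewrite imp_meet_self; exact (point_le P _ _ (imp_top_le a _) H).
Qed.

Lemma mem_of_coimp_le_join (P : X A) a b x t :
  co a b ∈ P -> x ∈ P -> lat_le m a (jn (im x t) b) -> t ∈ P.
Proof.
  intros Hab Hx Hle.
  apply (point_le P _ _ (imp_coimp_le x t)), point_meet; split; [exact Hx |].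
  apply (point_le P (co a b)); [| exact Hab].
  eapply (le_trans L); [apply coimp_monol, Hle |].
  rewrite coimp_joinl, coimp_refl, (join_bot L); apply coimp_antir, (bot_le L).
Qed.

Lemma R_witness (P : X A) a b :
  ~ im a b ∈ P -> exists Q, RA A P Q /\ a ∈ Q /\ ~ b ∈ Q.
Proof.
  (* A prime filter containing all [a ∧ (x <- t)] with [x ∈ P], [t ∉ P] has [S Q P]. *)
  intro Hab.
  destruct (prime_filter_between L
              (fun y => exists x t, x ∈ P /\ ~ t ∈ P /\ y = m a (co x t)) (eq b))
    as (Q & HQ & HDQ & HbQ).
  - exists (m a (co o z)), o, z; auto using point_top, point_not_bot.
  - intros d1 d2 (x1 & t1 & Hx1 & Ht1 & ->) (x2 & t2 & Hx2 & Ht2 & ->).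
    exists (m a (co (m x1 x2) (jn t1 t2))); split.
    + exists (m x1 x2), (jn t1 t2); rewrite point_meet, point_join; tauto.
    + apply (meet_glb L); apply (meet_mono L), coimp_le;
        first [apply (le_refl L) | apply (meet_lb1 L) | apply (meet_lb2 L)
              | apply (join_ub1 L) | apply (join_ub2 L)].
  - exists b; reflexivity.
  - intros ? ? <- <-; exists b; split; [reflexivity | apply (join_lub L); apply (le_refl L)].
  - intros d e (x & t & Hx & Ht & ->) <- Hle.
    exact (Hab (imp_mem_of_coimp_le P a b x t Hx Ht Hle)).
  - exists (exist _ Q HQ); split; [apply S_R_converse | split]; cbn.
    + intros x t Hx Ht; apply (prime_le HQ (m a (co x t))); [apply (meet_lb2 L) |].
      apply HDQ; exists x, t; auto.
    + apply (prime_le HQ (m a (co o z))); [apply (meet_lb1 L) |].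
      apply HDQ; exists o, z; auto using point_top, point_not_bot.
    + apply HbQ; reflexivity.
Qed.

Lemma S_witness (P : X A) a b :
  co a b ∈ P -> exists Q, SA A P Q /\ a ∈ Q /\ ~ b ∈ Q.
Proof.
  (* A prime filter avoiding all [(x -> t) ∨ b] with [x ∈ P], [t ∉ P] has [R Q P]. *)
  intro Hab.
  destruct (prime_filter_between L (eq a)
              (fun y => exists x t, x ∈ P /\ ~ t ∈ P /\ y = jn (im x t) b))
    as (Q & HQ & HaQ & HEQ).
  - exists a; reflexivity.
  - intros ? ? <- <-; exists a; split; [reflexivity | rewrite (meet_idem L); apply (le_refl L)].
  - exists (jn (im o z) b), o, z; auto using point_top, point_not_bot.
  - intros e1 e2 (x1 & t1 & Hx1 & Ht1 & ->) (x2 & t2 & Hx2 & Ht2 & ->).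
    exists (jn (im (m x1 x2) (jn t1 t2)) b); split.
    + exists (m x1 x2), (jn t1 t2); rewrite point_meet, point_join; tauto.
    + apply (join_lub L); apply (join_mono L); [apply imp_le | | apply imp_le |];
        first [apply (le_refl L) | apply (meet_lb1 L) | apply (meet_lb2 L)
              | apply (join_ub1 L) | apply (join_ub2 L)].
  - intros d e <- (x & t & Hx & Ht & ->) Hle.
    exact (Ht (mem_of_coimp_le_join P a b x t Hab Hx Hle)).
  - exists (exist _ Q HQ); split; [apply R_S_converse | split]; cbn.
    + intros x t Hxt Hx; apply NNPP; intro Ht.
      apply (HEQ (jn (im x t) b)); [exists x, t; auto |].
      apply (prime_le HQ (im x t)); [apply (join_ub1 L) | exact Hxt].
    + apply HaQ; reflexivity.
    + intro Hb; apply (HEQ (jn (im o z) b)).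
      * exists o, z; auto using point_top, point_not_bot.
      * apply (prime_le HQ b); [apply (join_ub2 L) | exact Hb].
Qed.

Lemma GA_imp (P : X A) a b : GA A (fun Q => ~ a ∈ Q \/ b ∈ Q) P <-> im a b ∈ P.
Proof.
  split.
  - intro H; apply NNPP; intro Hn; destruct (R_witness P a b Hn) as (Q & HR & Ha & Hb).
    destruct (H Q HR); contradiction.
  - intros H Q HR; destruct (classic (a ∈ Q)) as [Ha | Ha]; [right | left; exact Ha].
    exact (HR a b H Ha).
Qed.

Lemma HA_coimp (P : X A) a b : HA A (fun Q => ~ a ∈ Q \/ b ∈ Q) P <-> ~ co a b ∈ P.
Proof.
  split.
  - intros H Hc; destruct (S_witness P a b Hc) as (Q & HS & Ha & Hb).
    destruct (H Q HS); contradiction.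
  - intros H Q HS; destruct (classic (a ∈ Q)) as [Ha | Ha]; [right | left; exact Ha].
    apply NNPP; intro Hb; exact (H (HS a b Ha Hb)).
Qed.
End WHBAlgebra.

Definition dnf {W : Type} (l : list (W * W)) (p : W -> Prop) : Prop :=
  exists a b, In (a, b) l /\ p a /\ ~ p b.
Definition cnf {W : Type} (l : list (W * W)) (p : W -> Prop) : Prop :=
  forall a b, In (a, b) l -> ~ p a \/ p b.

Lemma cnf_iff_not_dnf {W : Type} (l : list (W * W)) p : cnf l p <-> ~ dnf l p.
Proof.
  unfold cnf, dnf; split.
  - intros H (a & b & Hi & Ha & Hb); destruct (H a b Hi); contradiction.
  - intros H a b Hi; destruct (classic (p a)) as [Ha | Ha]; [right | left; exact Ha].
    apply NNPP; intro Hb; apply H; exists a, b; auto.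
Qed.

Definition meet_join_pairs {W : Type} (mm jj : W -> W -> W) (l1 l2 : list (W * W)) :=
  flat_map (fun p => map (fun q => (mm (fst p) (fst q), jj (snd p) (snd q))) l2) l1.

Lemma inB_ext (A : WHBraw) (U V : X A -> Prop) :
  inB A U -> (forall P, U P <-> V P) -> inB A V.
Proof. intros (l & Hl) H; exists l; intro P; rewrite <- H; apply Hl. Qed.

Section Clopens.
Variable A : WHBraw.
Hypothesis HWA : isWHB A.

Local Notation m := (wmeet A).
Local Notation jn := (wjoin A).

Lemma inB_union U V : inB A U -> inB A V -> inB A (fun P => U P \/ V P).
Proof.
  intros (l1 & H1) (l2 & H2); exists (l1 ++ l2); intro P; rewrite H1, H2; split.
  - intros [(a & b & Hi & Ha & Hb) | (a & b & Hi & Ha & Hb)];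
      exists a, b; rewrite in_app_iff; auto.
  - intros (a & b & Hi & Ha & Hb); apply in_app_iff in Hi.
    destruct Hi; [left | right]; exists a, b; auto.
Qed.

Lemma inB_inter U V : inB A U -> inB A V -> inB A (fun P => U P /\ V P).
Proof.
  intros (l1 & H1) (l2 & H2); exists (meet_join_pairs m jn l1 l2); intro P.
  rewrite H1, H2; unfold meet_join_pairs, sigmaA; split.
  - intros [(a & b & Hi & Ha & Hb) (c & d & Hi' & Hc & Hd)].
    exists (m a c), (jn b d); split.
    + apply in_flat_map; exists (a, b); split; [exact Hi |].
      apply in_map_iff; exists (c, d); auto.
    + rewrite (point_meet A HWA), (point_join A HWA); tauto.
  - intros (a & b & Hi & Ha & Hb); apply in_flat_map in Hi.
    destruct Hi as ((a1, b1) & Hi1 & Hi2); apply in_map_iff in Hi2.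
    destruct Hi2 as ((a2, b2) & He & Hi2); injection He as <- <-.
    rewrite (point_meet A HWA) in Ha; rewrite (point_join A HWA) in Hb.
    split; [exists a1, b1 | exists a2, b2]; cbn in *; tauto.
Qed.

Lemma inB_true : inB A (fun _ => True).
Proof.
  exists [(wtop A, wbot A)]; intro P; split; [intros _ | auto].
  exists (wtop A), (wbot A); split; [left; reflexivity |].
  split; [apply point_top | apply point_not_bot].
Qed.

Lemma inB_sigma a : inB A (sigmaA A a).
Proof.
  exists [(a, wbot A)]; intro P; split.
  - intro Ha; exists a, (wbot A).
    split; [left; reflexivity | split; [exact Ha | apply point_not_bot]].
  - intros (a' & b' & [He | []] & Ha & _); injection He as <- <-; exact Ha.
Qed.

Lemma inB_not_sigma a : inB A (fun P => ~ a ∈ P).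
Proof.
  exists [(wtop A, a)]; intro P; split.
  - intro Ha; exists (wtop A), a.
    split; [left; reflexivity | split; [apply point_top | exact Ha]].
  - intros (a' & b' & [He | []] & _ & Hb); injection He as <- <-; exact Hb.
Qed.

Lemma inB_forall (l : list (wcar A * wcar A)) (F : wcar A -> wcar A -> X A -> Prop) :
  (forall a b, inB A (F a b)) -> inB A (fun P => forall a b, In (a, b) l -> F a b P).
Proof.
  intro HF; induction l as [| (a, b) l IH].
  - eapply inB_ext; [apply inB_true |]; intro P; split; [intros _ a b [] | auto].
  - eapply inB_ext; [apply inB_inter; [apply (HF a b) | apply IH] |]; intro P; split.
    + intros [H1 H2] a' b' [He | Hi]; [injection He as <- <-; exact H1 | auto].
    + intro H; split; [apply H; left; reflexivity |].
      intros a' b' Hi; apply H; right; exact Hi.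
Qed.

Lemma inB_cnf l : inB A (fun P => cnf l (fun a => a ∈ P)).
Proof.
  apply inB_forall; intros a b; apply inB_union; [apply inB_not_sigma | apply inB_sigma].
Qed.

Lemma inB_compl U : inB A U -> inB A (fun P => ~ U P).
Proof.
  intros (l & Hl); eapply inB_ext; [apply (inB_cnf l) |].
  intro P; rewrite cnf_iff_not_dnf, Hl; reflexivity.
Qed.

Lemma inB_as_cnf U : inB A U -> exists l, forall P, U P <-> cnf l (fun a => a ∈ P).
Proof.
  intro H; destruct (inB_compl U H) as (l & Hl); exists l; intro P.
  specialize (Hl P); rewrite cnf_iff_not_dnf; unfold dnf; unfold sigmaA in Hl; tauto.
Qed.

Lemma GA_cnf U l : (forall P, U P <-> cnf l (fun a => a ∈ P)) ->
  forall P, GA A U P <-> (forall a b, In (a, b) l -> wimp A a b ∈ P).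
Proof.
  intros HU P; split.
  - intros H a b Hi; apply (GA_imp A HWA); intros Q HR; apply HU; auto.
  - intros H Q HR; apply HU; intros a b Hi; apply (GA_imp A HWA P a b); auto.
Qed.

Lemma HA_cnf U l : (forall P, U P <-> cnf l (fun a => a ∈ P)) ->
  forall P, HA A U P <-> (forall a b, In (a, b) l -> ~ wcoimp A a b ∈ P).
Proof.
  intros HU P; split.
  - intros H a b Hi; apply (HA_coimp A HWA); intros Q HS; apply HU; auto.
  - intros H Q HS; apply HU; intros a b Hi; apply (HA_coimp A HWA P a b); auto.
Qed.

Lemma inB_G U : inB A U -> inB A (GA A U).
Proof.
  intro H; destruct (inB_as_cnf U H) as (l & Hl).
  eapply inB_ext; [apply (inB_forall l (fun a b => sigmaA A (wimp A a b))) |].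
  - intros; apply inB_sigma.
  - intro P; rewrite (GA_cnf U l Hl); reflexivity.
Qed.

Lemma inB_H U : inB A U -> inB A (HA A U).
Proof.
  intro H; destruct (inB_as_cnf U H) as (l & Hl).
  eapply inB_ext; [apply (inB_forall l (fun a b P => ~ wcoimp A a b ∈ P)) |].
  - intros; apply inB_not_sigma.
  - intro P; rewrite (HA_cnf U l Hl); reflexivity.
Qed.

Lemma T_obj_wd : T_obj_ok A.
Proof.
  split; [apply inB_empty | split; [apply inB_true |]].
  intros [U HU] [V HV]; cbn.
  repeat split; auto using inB_inter, inB_union, inB_compl, inB_G, inB_H.
Qed.
End Clopens.

Lemma BA_ext (A : WHBraw) (U V : BA A) : (forall P, P ∈ U <-> P ∈ V) -> U = V.
Proof.
  destruct U as [U HU], V as [V HV]; cbn; intro H.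
  assert (U = V) as <- by (apply set_ext; intro P; apply H).
  f_equal; apply proof_irrelevance.
Qed.

Lemma toB_val (A : WHBraw) S : inB A S -> proj1_sig (toB A S) = S.
Proof.
  intro H; unfold toB; destruct excluded_middle_informative; [reflexivity | contradiction].
Qed.

Definition sigma_hat (A : WHBraw) (a : wcar A) : BA A := toB A (sigmaA A a).

Section TAlgebra.
Variable A : WHBraw.
Hypothesis HWA : isWHB A.

Lemma T_meetE U V : proj1_sig (tmeet (T A) U V) = fun P => P ∈ U /\ P ∈ V.
Proof. apply toB_val, inB_inter; [exact HWA | apply (proj2_sig U) | apply (proj2_sig V)]. Qed.
Lemma T_joinE U V : proj1_sig (tjoin (T A) U V) = fun P => P ∈ U \/ P ∈ V.
Proof. apply toB_val, inB_union; [apply (proj2_sig U) | apply (proj2_sig V)]. Qed.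
Lemma T_negE U : proj1_sig (tneg (T A) U) = fun P => ~ P ∈ U.
Proof. apply toB_val, inB_compl; [exact HWA | apply (proj2_sig U)]. Qed.
Lemma T_botE : proj1_sig (tbot (T A)) = fun _ => False.
Proof. apply toB_val, inB_empty. Qed.
Lemma T_topE : proj1_sig (ttop (T A)) = fun _ => True.
Proof. apply toB_val, inB_true. Qed.
Lemma T_GE U : proj1_sig (tG (T A) U) = GA A (proj1_sig U).
Proof. apply toB_val, inB_G; [exact HWA | apply (proj2_sig U)]. Qed.
Lemma T_HE U : proj1_sig (tH (T A) U) = HA A (proj1_sig U).
Proof. apply toB_val, inB_H; [exact HWA | apply (proj2_sig U)]. Qed.
Lemma sigma_hatE a : proj1_sig (sigma_hat A a) = sigmaA A a.
Proof. apply toB_val, inB_sigma. Qed.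
End TAlgebra.

Global Hint Rewrite T_meetE T_joinE T_negE T_botE T_topE T_GE T_HE sigma_hatE
  using assumption : T_eval.

Ltac T_eval := autorewrite with T_eval in *; unfold sigmaA in *; cbv beta in *.
Ltac T_decide := apply BA_ext; intro; T_eval; tauto.

Section TIsTense.
Variable A : WHBraw.
Hypothesis HWA : isWHB A.

Lemma T_le U V : tle (T A) U V <-> subset (proj1_sig U) (proj1_sig V).
Proof.
  unfold tle; split.
  - intros H P HU; rewrite <- H in HU; T_eval; apply HU.
  - intro H; apply BA_ext; intro P; T_eval; split; [tauto | intro; split; auto].
Qed.

Lemma T_isTBA : isTBA (T A).
Proof.
  split; [repeat split; intros; T_decide |].
  split; [intro; T_decide |]. split; [intro; T_decide |].
  split; intros U V; rewrite !T_le; unfold tP, tF; T_eval; unfold GA, HA, subset.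
  - split.
    + intros H P HU Q HR; apply H; intro Hn; apply (Hn P); [apply R_S_converse |]; assumption.
    + intros H P Hn; apply NNPP; intro HV; apply Hn; intros Q HS HU.
      apply HV, (H Q HU), S_R_converse; assumption.
  - split.
    + intros H P HU Q HS; apply H; intro Hn; apply (Hn P); [apply S_R_converse |]; assumption.
    + intros H P Hn; apply NNPP; intro HV; apply Hn; intros Q HR HU.
      apply HV, (H Q HU), R_S_converse; assumption.
Qed.

Lemma sigma_hat_meet a b :
  sigma_hat A (wmeet A a b) = tmeet (T A) (sigma_hat A a) (sigma_hat A b).
Proof. apply BA_ext; intro P; T_eval; apply point_meet, HWA. Qed.
Lemma sigma_hat_join a b :
  sigma_hat A (wjoin A a b) = tjoin (T A) (sigma_hat A a) (sigma_hat A b).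
Proof. apply BA_ext; intro P; T_eval; apply point_join, HWA. Qed.
Lemma sigma_hat_bot : sigma_hat A (wbot A) = tbot (T A).
Proof. apply BA_ext; intro P; T_eval; split; [apply point_not_bot | intros []]. Qed.
Lemma sigma_hat_top : sigma_hat A (wtop A) = ttop (T A).
Proof. apply BA_ext; intro P; T_eval; split; [auto | intros _; apply point_top]. Qed.
Lemma sigma_hat_imp a b :
  sigma_hat A (wimp A a b) =
  tG (T A) (tjoin (T A) (tneg (T A) (sigma_hat A a)) (sigma_hat A b)).
Proof. apply BA_ext; intro P; T_eval; rewrite (GA_imp A HWA); reflexivity. Qed.
Lemma sigma_hat_coimp a b :
  sigma_hat A (wcoimp A a b) =
  tP (T A) (tmeet (T A) (sigma_hat A a) (tneg (T A) (sigma_hat A b))).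
Proof.
  apply BA_ext; intro P; unfold tP; T_eval.
  replace (fun Q : X A => ~ (a ∈ Q /\ ~ b ∈ Q)) with (fun Q : X A => ~ a ∈ Q \/ b ∈ Q)
    by (apply set_ext; intros Q; cbv beta; tauto).
  rewrite (HA_coimp A HWA); tauto.
Qed.
End TIsTense.

Definition dnf_term (B : TBAraw) {W : Type} (f : W -> tcar B) (l : list (W * W)) : tcar B :=
  fold_right (tjoin B) (tbot B)
    (map (fun q => tmeet B (f (fst q)) (tneg B (f (snd q)))) l).
Definition cnf_term (B : TBAraw) {W : Type} (f : W -> tcar B) (l : list (W * W)) : tcar B :=
  fold_right (tmeet B) (ttop B)
    (map (fun q => tjoin B (tneg B (f (fst q))) (f (snd q))) l).

Lemma dnf_term_prime B (HB : isTBA B) {W : Type} (f : W -> tcar B) Q (HQ : tba_prime B Q) l :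
  Q (dnf_term B f l) <-> dnf l (fun a => Q (f a)).
Proof.
  unfold dnf_term; induction l as [| (a, b) l IH]; cbn.
  - rewrite (tba_prime_bot B Q HQ); split; [intros [] | intros (? & ? & [] & _)].
  - rewrite (prime_join (tba_bdl B HB) HQ), (prime_meet (tba_bdl B HB) HQ),
      (tba_prime_neg B HB Q HQ), IH; unfold dnf; split.
    + intros [[Ha Hb] | (a' & b' & Hi & Ha & Hb)]; [exists a, b | exists a', b']; cbn; auto.
    + intros (a' & b' & [He | Hi] & Ha & Hb); [injection He as <- <-; auto |].
      right; exists a', b'; auto.
Qed.

Lemma dnf_term_hom (B B' : TBAraw) (g : tcar B -> tcar B') {W : Type} (f : W -> tcar B) l :
  TBAhom B B' g -> g (dnf_term B f l) = dnf_term B' (fun a => g (f a)) l.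
Proof.
  intros (Hm & Hj & Hn & Hb & _); unfold dnf_term; induction l as [| q l IH]; cbn; [exact Hb |].
  rewrite Hj, Hm, Hn, IH; reflexivity.
Qed.

Lemma G_commutes_on_meets (B1 B2 : TBAraw) (HB1 : isTBA B1) (HB2 : isTBA B2)
  (g : tcar B1 -> tcar B2) :
  (forall x y, g (tmeet B1 x y) = tmeet B2 (g x) (g y)) -> g (ttop B1) = ttop B2 ->
  forall l, (forall c, In c l -> g (tG B1 c) = tG B2 (g c)) ->
  g (tG B1 (fold_right (tmeet B1) (ttop B1) l))
  = tG B2 (g (fold_right (tmeet B1) (ttop B1) l)).
Proof.
  intros Hm Ht l Hl; induction l as [| c l IH]; cbn.
  - rewrite (G_top B1 HB1), Ht, (G_top B2 HB2); reflexivity.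
  - rewrite (G_meet B1 HB1), !Hm, (G_meet B2 HB2), Hl, IH by (cbn in *; auto).
    reflexivity.
Qed.

Lemma H_neg_join B (HB : isTBA B) x y :
  tH B (tjoin B (tneg B x) y) = tneg B (tP B (tmeet B x (tneg B y))).
Proof. rewrite (H_as_P B HB); do 2 f_equal; tba_decide HB. Qed.

Section TGenerators.
Variable A : WHBraw.
Hypothesis HWA : isWHB A.

Lemma dnf_term_mem l P : P ∈ dnf_term (T A) (sigma_hat A) l <-> dnf l (fun a => a ∈ P).
Proof.
  unfold dnf_term, dnf; induction l as [| (a, b) l IH]; cbn [fold_right map fst snd]; T_eval.
  - split; [intros [] | intros (? & ? & [] & _)].
  - rewrite IH; split.
    + intros [[Ha Hb] | (a' & b' & Hi & Ha & Hb)]; [exists a, b | exists a', b']; cbn; auto.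
    + intros (a' & b' & [He | Hi] & Ha & Hb); [injection He as <- <-; auto |].
      right; exists a', b'; auto.
Qed.

Lemma cnf_term_mem l P : P ∈ cnf_term (T A) (sigma_hat A) l <-> cnf l (fun a => a ∈ P).
Proof.
  unfold cnf_term, cnf; induction l as [| (a, b) l IH]; cbn [fold_right map fst snd]; T_eval.
  - split; [intros _ ? ? [] | auto].
  - rewrite IH; split.
    + intros [Hab H] a' b' [He | Hi]; [injection He as <- <-; exact Hab | auto].
    + intro H; split; [apply H; left; reflexivity |].
      intros a' b' Hi; apply H; right; exact Hi.
Qed.

Lemma BA_as_dnf (U : BA A) : exists l, U = dnf_term (T A) (sigma_hat A) l.
Proof.
  destruct (proj2_sig U) as (l & Hl); exists l.
  apply BA_ext; intro P.
  rewrite dnf_term_mem; apply Hl.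
Qed.

Lemma BA_as_cnf (U : BA A) : exists l, U = cnf_term (T A) (sigma_hat A) l.
Proof.
  destruct (inB_as_cnf A HWA _ (proj2_sig U)) as (l & Hl); exists l.
  apply BA_ext; intro P.
  rewrite cnf_term_mem; apply Hl.
Qed.

Lemma sigma_hat_hom : WHBhom A (M (T A)) (sigma_hat A).
Proof.
  repeat split; cbn -[T].
  - exact (sigma_hat_meet A HWA).
  - exact (sigma_hat_join A HWA).
  - exact (sigma_hat_imp A HWA).
  - exact (sigma_hat_coimp A HWA).
  - exact (sigma_hat_bot A).
  - exact (sigma_hat_top A).
Qed.
End TGenerators.

Lemma T_hom_of_sigma_hat A (HWA : isWHB A) B (HB : isTBA B) (g : BA A -> tcar B) :
  (forall U V, g (tmeet (T A) U V) = tmeet B (g U) (g V)) ->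
  (forall U V, g (tjoin (T A) U V) = tjoin B (g U) (g V)) ->
  (forall U, g (tneg (T A) U) = tneg B (g U)) ->
  g (tbot (T A)) = tbot B -> g (ttop (T A)) = ttop B ->
  WHBhom A (M B) (fun a => g (sigma_hat A a)) -> TBAhom (T A) B g.
Proof.
  intros Hm Hj Hn Hb Ht (_ & _ & Hi & Hc & _); cbn in Hi, Hc.
  pose proof (T_isTBA A HWA) as HTA.
  do 5 (split; [assumption |]); split; intro U; destruct (BA_as_cnf A HWA U) as (l & ->);
    unfold cnf_term.
  - apply (G_commutes_on_meets (T A) B HTA HB g Hm Ht).
    intros c Hcl; apply in_map_iff in Hcl; destruct Hcl as ((a, b) & <- & _); cbn [fst snd].
    rewrite <- (sigma_hat_imp A HWA), Hi, Hj, Hn; reflexivity.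
  - (* [H] is the [G] of the mirror algebras. *)
    apply (G_commutes_on_meets (tba_mirror (T A)) (tba_mirror B)
             (isTBA_mirror _ HTA) (isTBA_mirror B HB) g Hm Ht).
    intros c Hcl; apply in_map_iff in Hcl; destruct Hcl as ((a, b) & <- & _).
    cbn [fst snd tba_mirror tG tjoin tneg].
    rewrite (H_neg_join (T A) HTA), <- (sigma_hat_coimp A HWA), Hn, Hc, Hj, Hn,
      (H_neg_join B HB); reflexivity.
Qed.

Lemma X_ext (A : WHBraw) (P P' : X A) : (forall a, a ∈ P <-> a ∈ P') -> P = P'.
Proof.
  destruct P as [P HP], P' as [P' HP']; cbn; intro H.
  assert (P = P') as <- by (apply set_ext; intro a; apply H).
  f_equal; apply proof_irrelevance.
Qed.

Lemma whb_hom_id A : WHBhom A A (fun a => a).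
Proof. repeat split. Qed.

Lemma whb_hom_comp A A' A'' h h' :
  WHBhom A A' h -> WHBhom A' A'' h' -> WHBhom A A'' (fun a => h' (h a)).
Proof.
  intros (H1 & H2 & H3 & H4 & H5 & H6) (H1' & H2' & H3' & H4' & H5' & H6').
  repeat split; intros; rewrite ?H1, ?H2, ?H3, ?H4, ?H5, ?H6; auto.
Qed.

Section Preimage.
Variables A A' : WHBraw.
Variable h : wcar A -> wcar A'.
Hypothesis Hh : WHBhom A A' h.

Lemma preimage_prime (Q : X A') : prime_filter A (fun a => h a ∈ Q).
Proof.
  destruct Hh as (Hm & Hj & _ & _ & Hb & Ht).
  destruct (proj2_sig Q) as (Qt & Qb & Qle & Qm & Qj).
  split; [rewrite Ht; exact Qt | split; [rewrite Hb; exact Qb | split; [| split]]].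
  - intros a b Ha Hab; apply (Qle (h a)); [exact Ha |].
    unfold wle in *; rewrite <- Hm, Hab; reflexivity.
  - intros a b Ha Hb'; rewrite Hm; auto.
  - intros a b Hab; rewrite Hj in Hab; auto.
Qed.

Definition preimage (Q : X A') : X A := exist _ (fun a => h a ∈ Q) (preimage_prime Q).

Lemma Tmap_raw_iff U Q : Tmap_raw A A' h U Q <-> preimage Q ∈ U.
Proof.
  unfold Tmap_raw, preimage; split.
  - intros (p & Hp); replace (preimage_prime Q) with p by apply proof_irrelevance; exact Hp.
  - intro H; exists (preimage_prime Q); exact H.
Qed.

Lemma T_map_wd : T_map_ok A A' h.
Proof.
  intros [U (l & Hl)]; exists (map (fun q => (h (fst q), h (snd q))) l); intro Q.
  rewrite Tmap_raw_iff, Hl; unfold sigmaA; cbn; split.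
  - intros (a & b & Hi & Ha & Hb); exists (h a), (h b); split; [| auto].
    apply in_map_iff; exists (a, b); auto.
  - intros (a' & b' & Hi & Ha & Hb); apply in_map_iff in Hi.
    destruct Hi as ((a, b) & He & Hi); injection He as <- <-; exists a, b; auto.
Qed.

Lemma TmapE U : proj1_sig (Tmap A A' h U) = fun Q => preimage Q ∈ U.
Proof.
  unfold Tmap; rewrite toB_val by apply T_map_wd.
  apply set_ext; intros Q; apply Tmap_raw_iff.
Qed.
End Preimage.

Section TOnMorphisms.
Variables A A' : WHBraw.
Variable h : wcar A -> wcar A'.
Hypothesis HWA : isWHB A.
Hypothesis HWA' : isWHB A'.
Hypothesis Hh : WHBhom A A' h.

Lemma Tmap_sigma_hat a : Tmap A A' h (sigma_hat A a) = sigma_hat A' (h a).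
Proof. apply BA_ext; intro Q; rewrite (TmapE A A' h Hh); T_eval; reflexivity. Qed.

Lemma Tmap_hom : TBAhom (T A) (T A') (Tmap A A' h).
Proof.
  apply (T_hom_of_sigma_hat A HWA (T A') (T_isTBA A' HWA'));
    try (intros; apply BA_ext; intro Q; T_eval; rewrite ?(TmapE A A' h Hh) in *; T_eval; tauto).
  replace (fun a => Tmap A A' h (sigma_hat A a)) with (fun a => sigma_hat A' (h a))
    by (apply functional_extensionality; intro a; symmetry; apply Tmap_sigma_hat).
  exact (whb_hom_comp _ _ _ _ _ Hh (sigma_hat_hom A' HWA')).
Qed.
End TOnMorphisms.

Lemma T_functorial : T_is_functor.
Proof.
  split; [| split; [| split]].
  - intros A HA; split; [apply T_obj_wd, HA | apply T_isTBA, HA].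
  - intros A A' h HA HA' Hh; split; [apply T_map_wd, Hh | apply Tmap_hom; assumption].
  - intros A HA U; pose proof (whb_hom_id A) as Hid; apply BA_ext; intro P.
    rewrite (TmapE A A _ Hid).
    replace (preimage A A (fun a => a) Hid P) with P; [reflexivity |].
    apply X_ext; reflexivity.
  - intros A A' A'' h h' HA HA' HA'' Hh Hh' U.
    pose proof (whb_hom_comp _ _ _ _ _ Hh Hh') as Hhh'; apply BA_ext; intro Q.
    rewrite (TmapE _ _ _ Hhh'), (TmapE _ _ _ Hh'), (TmapE _ _ _ Hh).
    replace (preimage A A'' (fun a => h' (h a)) Hhh' Q)
      with (preimage A A' h Hh (preimage A' A'' h' Hh' Q)); [reflexivity |].
    apply X_ext; reflexivity.
Qed.

Lemma sigma_hat_inj A (HWA : isWHB A) a b : sigma_hat A a = sigma_hat A b -> a = b.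
Proof.
  intro H; apply (eq_of_prime_filters (whb_bdl A HWA)); intros Q HQ.
  apply (f_equal (fun U : BA A => exist (prime_filter A) Q HQ ∈ U)) in H.
  rewrite !sigma_hatE in H; cbn in H; rewrite H; reflexivity.
Qed.

Lemma T_faithfulness : T_faithful.
Proof.
  intros A A' h1 h2 HA HA' Hh1 Hh2 H a; apply (sigma_hat_inj A' HA').
  rewrite <- (Tmap_sigma_hat _ _ _ Hh1), <- (Tmap_sigma_hat _ _ _ Hh2); apply H.
Qed.

Section KernelPair.
Variables A A' : WHBraw.
Variable h : wcar A -> wcar A'.
Hypothesis HWA : isWHB A.
Hypothesis Hh : WHBhom A A' h.

Definition kernel_pair_car := { p : wcar A * wcar A | h (fst p) = h (snd p) }.

Definition kernel_pair_op
  (op : wcar A -> wcar A -> wcar A) (op' : wcar A' -> wcar A' -> wcar A')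
  (Hop : forall a b, h (op a b) = op' (h a) (h b)) (x y : kernel_pair_car) : kernel_pair_car.
Proof.
  refine (exist _ (op (fst (proj1_sig x)) (fst (proj1_sig y)),
                   op (snd (proj1_sig x)) (snd (proj1_sig y))) _).
  cbn; rewrite !Hop, (proj2_sig x), (proj2_sig y); reflexivity.
Defined.

Definition kernel_pair : WHBraw := {|
  wcar := kernel_pair_car;
  wmeet := kernel_pair_op _ _ (proj1 Hh);
  wjoin := kernel_pair_op _ _ (proj1 (proj2 Hh));
  wimp := kernel_pair_op _ _ (proj1 (proj2 (proj2 Hh)));
  wcoimp := kernel_pair_op _ _ (proj1 (proj2 (proj2 (proj2 Hh))));
  wbot := exist _ (wbot A, wbot A) eq_refl;
  wtop := exist _ (wtop A, wtop A) eq_refl |}.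

Lemma kernel_pair_eq (x y : kernel_pair_car) :
  fst (proj1_sig x) = fst (proj1_sig y) -> snd (proj1_sig x) = snd (proj1_sig y) -> x = y.
Proof.
  destruct x as [[x1 x2] Hx], y as [[y1 y2] Hy]; cbn; intros <- <-.
  f_equal; apply proof_irrelevance.
Qed.

Lemma kernel_pair_isWHB : isWHB kernel_pair.
Proof.
  destruct HWA as ((L1 & L2 & L3 & L4 & L5 & L6 & L7 & L8 & L9) &
    A1 & A2 & A3 & A4 & A5 & A6 & A7 & A8 & A9 & A10).
  unfold isWHB, wle; cbn.
  repeat split; intros; apply kernel_pair_eq; cbn; auto.
  all: first [apply A4 | apply A8 | apply A9 | apply A10].
Qed.

Lemma kernel_pair_fst : WHBhom kernel_pair A (fun x => fst (proj1_sig x)).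
Proof. repeat split. Qed.
Lemma kernel_pair_snd : WHBhom kernel_pair A (fun x => snd (proj1_sig x)).
Proof. repeat split. Qed.
End KernelPair.

Lemma mono_injective A A' h :
  isWHB A -> forall Hh : WHBhom A A' h, WHBmono A A' h -> forall a b, h a = h b -> a = b.
Proof.
  intros HA Hh Hmono a b Hab.
  exact (Hmono (kernel_pair A A' h Hh) _ _ (kernel_pair_isWHB A A' h HA Hh)
            (kernel_pair_fst A A' h Hh) (kernel_pair_snd A A' h Hh)
            (fun x => proj2_sig x) (exist _ (a, b) Hab)).
Qed.

Lemma preimage_surjective A A' h (HA : isWHB A) (HA' : isWHB A') (Hh : WHBhom A A' h) :
  (forall a b, h a = h b -> a = b) -> forall P : X A, exists Q, preimage A A' h Hh Q = P.
Proof.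
  intros Hinj P; pose proof Hh as (Hm & Hj & _).
  pose proof (whb_bdl A' HA') as L'.
  destruct (prime_filter_between L' (fun y => exists x, x ∈ P /\ y = h x)
              (fun y => exists x, ~ x ∈ P /\ y = h x)) as (Q & HQ & HPQ & HQP).
  - exists (h (wtop A)), (wtop A); split; [apply point_top | reflexivity].
  - intros ? ? (x1 & H1 & ->) (x2 & H2 & ->); exists (h (wmeet A x1 x2)); split.
    + exists (wmeet A x1 x2); split; [apply point_meet; auto | reflexivity].
    + rewrite Hm; apply (le_refl L').
  - exists (h (wbot A)), (wbot A); split; [apply point_not_bot | reflexivity].
  - intros ? ? (x1 & H1 & ->) (x2 & H2 & ->); exists (h (wjoin A x1 x2)); split.
    + exists (wjoin A x1 x2); split; [rewrite (point_join A HA); tauto | reflexivity].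
    + rewrite Hj; apply (le_refl L').
  - intros ? ? (x & Hx & ->) (x' & Hx' & ->) Hle; apply Hx'.
    apply (point_le A P x); [| exact Hx].
    unfold lat_le in *; apply Hinj; rewrite Hm; exact Hle.
  - exists (exist _ Q HQ); apply X_ext; intro a; cbn; split.
    + intro Ha; apply NNPP; intro Hn; exact (HQP (h a) (ex_intro _ a (conj Hn eq_refl)) Ha).
    + intro Ha; apply HPQ; exists a; auto.
Qed.

Lemma T_mono_preserving : T_preserves_monos.
Proof.
  intros A A' h HA HA' Hh Hmono C g1 g2 HC Hg1 Hg2 Heq c.
  pose proof (preimage_surjective A A' h HA HA' Hh (mono_injective A A' h HA Hh Hmono))
    as Hsurj.
  apply BA_ext; intro P; destruct (Hsurj P) as (Q & <-).
  pose proof (f_equal (fun U => Q ∈ U) (Heq c)) as E; cbv beta in E.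
  rewrite !(TmapE A A' h Hh) in E; rewrite E; reflexivity.
Qed.

Definition dnf_of {A : WHBraw} (U : BA A) : list (wcar A * wcar A) :=
  proj1_sig (constructive_indefinite_description _ (proj2_sig U)).

Lemma dnf_of_spec {A : WHBraw} (U : BA A) P : P ∈ U <-> dnf (dnf_of U) (fun a => a ∈ P).
Proof.
  unfold dnf_of; destruct constructive_indefinite_description as (l & Hl); apply Hl.
Qed.

Section Extension.
Variable A : WHBraw.
Variable B : TBAraw.
Hypothesis HWA : isWHB A.
Hypothesis HB : isTBA B.
Variable f : wcar A -> tcar B.
Hypothesis Hf : WHBhom A (M B) f.

Definition extension (U : BA A) : tcar B := dnf_term B f (dnf_of U).

(* Prime filters of [B] are exactly the points of [X (M B)]. *)
Lemma extension_prime Q (HQ : tba_prime B Q) U :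
  Q (extension U) <-> preimage A (M B) f Hf (exist _ Q HQ) ∈ U.
Proof. unfold extension; rewrite (dnf_term_prime B HB f Q HQ), dnf_of_spec; reflexivity. Qed.

Ltac extension_decide :=
  apply (eq_of_prime_filters (tba_bdl B HB));
  let Q := fresh "Q" in let HQ := fresh "HQ" in
  intros Q HQ; tba_prime_simpl HB Q HQ; repeat rewrite (extension_prime Q HQ);
  T_eval; cbn; tauto.

Lemma extension_sigma_hat a : extension (sigma_hat A a) = f a.
Proof. extension_decide. Qed.

Lemma extension_hom : TBAhom (T A) B extension.
Proof.
  apply (T_hom_of_sigma_hat A HWA B HB); try (intros; extension_decide).
  replace (fun a => extension (sigma_hat A a)) with f; [exact Hf |].
  apply functional_extensionality; intro a; symmetry; apply extension_sigma_hat.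
Qed.
End Extension.

Definition Phi (A : WHBraw) (B : TBAraw) (g : tcar (T A) -> tcar B) :
  wcar A -> wcar (M B) := fun a => g (sigma_hat A a).

Lemma hom_determined_by_sigma_hat A (HWA : isWHB A) B (g1 g2 : tcar (T A) -> tcar B) :
  TBAhom (T A) B g1 -> TBAhom (T A) B g2 ->
  (forall a, g1 (sigma_hat A a) = g2 (sigma_hat A a)) -> forall U, g1 U = g2 U.
Proof.
  intros Hg1 Hg2 H U; destruct (BA_as_dnf A HWA U) as (l & ->).
  rewrite (dnf_term_hom _ _ _ _ _ Hg1), (dnf_term_hom _ _ _ _ _ Hg2).
  replace (fun a => g1 (sigma_hat A a)) with (fun a => g2 (sigma_hat A a));
    [reflexivity | apply functional_extensionality; intro a; symmetry; apply H].
Qed.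

Lemma T_adjunction : T_left_adjoint_M.
Proof.
  exists Phi; split.
  - intros A B HA HB; split; [| split].
    + intros g Hg; exact (whb_hom_comp _ _ _ _ _ (sigma_hat_hom A HA)
                            (proj2 M_functorial _ _ g (T_isTBA A HA) HB Hg)).
    + intros g1 g2 Hg1 Hg2; apply (hom_determined_by_sigma_hat A HA B g1 g2 Hg1 Hg2).
    + intros f Hf; exists (extension A B f); split.
      * exact (extension_hom A B HA HB f Hf).
      * intro a; exact (extension_sigma_hat A B HB f Hf a).
  - intros A A' B B' h k g _ _ _ _ Hh _ _ a'; unfold Phi, Mmap.
    rewrite (Tmap_sigma_hat _ _ _ Hh); reflexivity.
Qed.

Theorem theorem6p3 :
  T_is_functor /\ M_is_functor /\
  T_left_adjoint_M /\
  T_preserves_monos /\ T_faithful /\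
  M_full /\ M_faithful.
Proof.
  exact (conj T_functorial (conj M_functorial (conj T_adjunction
           (conj T_mono_preserving (conj T_faithfulness (conj M_fullness M_faithfulness)))))).
Qed.
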